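(* Let $\mathcal{H}=(Q_0,Q_1,\beta)$ be a directed tensor-labeled hypergraph over $\mathbb{R}$. Then the edge Gram operator $L_\beta=\partial_\beta^*\partial_\beta$ on $\mathbb{R}^{Q_1}$ satisfies $$\mathrm{rank}(L_\beta)=|Q_1|-\dim_{\mathbb{R}}\mathcal{Z}(\mathcal{H})=|V_{\mathrm{macro}}|-c_{\mathrm{macro}}-\delta(\mathcal{H}),$$ and this number equals the sum of the multiplicities of the nonzero eigenvalues of $L_\beta$.
   Context: $T(\mathbb{R}^{Q_0})=\bigoplus_{k\ge0}(\mathbb{R}^{Q_0})^{\otimes k}$, equipped with the inner product making the standard basis ($1$ and all $u_1\otimes\cdots\otimes u_k$, $u_i\in Q_0$, identifying $v$ with $\mathbf{1}_v$) orthonormal; $\mathbb{R}^{Q_1}$ has the standard inner product. A directed tensor-labeled hypergraph is $\mathcal{H}=(Q_0,Q_1,\beta)$ ($Q_0,Q_1$ finite) with $\beta:\mathbb{R}^{Q_1}\to T\times T$ linear, $\beta(\mathbf{1}_e)=(A_e,B_e)$. $\partial_\beta:\mathbb{R}^{Q_1}\to T(\mathbb{R}^{Q_0})$, $\mathbf{1}_e\mapsto B_e-A_e$; $\partial_\beta^*$ its adjoint; $\mathcal{Z}(\mathcal{H})=\mathrm{Ker}\,\partial_\beta$. $V_{\mathrm{macro}}=\{A_e\}\cup\{B_e\}$; the macrograph is the directed multigraph on $V_{\mathrm{macro}}$ with edges $Q_1$, $e:A_e\to B_e$; $c_{\mathrm{macro}}$ its number of weakly connected components; $B_{\mathrm{macro}}:\mathbf{1}_e\mapsto\mathbf{1}_{B_e}-\mathbf{1}_{A_e}$;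 $\hat\phi:\mathbb{R}^{V_{\mathrm{macro}}}\to T(\mathbb{R}^{Q_0})$, $\mathbf{1}_w\mapsto w$; $\delta(\mathcal{H})=\dim_{\mathbb{R}}(\mathrm{Im}B_{\mathrm{macro}}\cap\mathrm{Ker}\hat\phi)$. *)

From HB Require Import structures.
From mathcomp Require Import all_boot all_order all_algebra.
From mathcomp Require Import finmap.
From mathcomp Require Import reals.
Set Implicit Arguments. Unset Strict Implicit. Unset Printing Implicit Defensive.
Import Order.TTheory GRing.Theory Num.Theory.
Local Open Scope ring_scope.
Local Open Scope fset_scope.

Section Hypergraph.
Variables (R : realType) (Q0 Q1 : finType).

(* The tensor algebra T(R^{Q0}) = (+)_k (R^{Q0})^{(x)k}: an element is a finitely
   supported family of real coefficients indexed by words over Q0; the word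
   [:: u1; ..; uk] stands for the basis tensor u1 (x) ... (x) uk (the empty word
   for 1).  The inner product makes these basis tensors orthonormal. *)
Definition tensor := {fsfun seq Q0 -> R with 0}.

(* beta : R^{Q1} -> T x T is linear, hence determined by beta(1_e) = (A_e, B_e). *)
Variable beta : Q1 -> tensor * tensor.
Definition Aof (e : Q1) : tensor := (beta e).1.
Definition Bof (e : Q1) : tensor := (beta e).2.

(* a finite set of words containing the supports of all A_e, B_e; the image of
   every linear map below lies in the span of these basis words *)
Definition words : {fset seq Q0} :=
  \big[@fsetU _/fset0]_(e : Q1) (finsupp (Aof e) `|` finsupp (Bof e)).

Definition mx_of (I J : finType) (f : I -> J -> R) : 'M[R]_(#|I|, #|J|) :=
  \matrix_(i, j) f (enum_val i) (enum_val j).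

(* matrix of the boundary map d_beta : 1_e |-> B_e - A_e (row convention:
   x |-> x *m dmx), coordinates in the orthonormal basis of words *)
Definition dmx : 'M[R]_(#|Q1|, #|{: words}|) :=
  mx_of (fun (e : Q1) (w : words) => Bof e (val w) - Aof e (val w)).

Definition Lbeta : 'M[R]_#|Q1| := dmx *m dmx^T.

Definition dimZ : nat := \rank (kermx dmx).

Definition Vmacro : {fset tensor} :=
  [fset Aof e | e : Q1] `|` [fset Bof e | e : Q1].

Definition macro_adj : rel Vmacro := fun x y =>
  [exists e : Q1, ((Aof e == val x) && (Bof e == val y))
                  || ((Bof e == val x) && (Aof e == val y))].

Definition c_macro : nat := n_comp macro_adj predT.

Definition ind (v : tensor) (x : Vmacro) : R := (val x == v)%:R.

Definition Bmacro : 'M[R]_(#|Q1|, #|{: Vmacro}|) :=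
  mx_of (fun (e : Q1) (x : Vmacro) => ind (Bof e) x - ind (Aof e) x).

Definition phihat : 'M[R]_(#|{: Vmacro}|, #|{: words}|) :=
  mx_of (fun (x : Vmacro) (w : words) => (val x : tensor) (val w)).

Definition delta : nat := \rank (Bmacro :&: kermx phihat)%MS.

End Hypergraph.

From HB Require Import structures.
From mathcomp Require Import all_boot all_order all_algebra.
From mathcomp Require Import finmap reals complex zify.
Set Implicit Arguments. Unset Strict Implicit. Unset Printing Implicit Defensive.
Import GRing.Theory Num.Theory.
Local Open Scope ring_scope.

(* The Gram operator L = D D^T of the boundary matrix D has the rank of D,
   since over an ordered field K D D^T = 0 forces K D = 0; and
   rank D = |Q1| - dim Ker D.  The boundary factors through the macrograph,
   D = B_macro phihat, so rank D = rank B_macro - dim (Im B_macro :&: Ker phihat).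
   An incidence matrix has rank |V| - c: its left kernel consists of the
   functions that agree at both ends of every edge, i.e. that are constant on
   weak components, and the component indicators form a basis of it.  Finally
   L is real symmetric, hence unitarily diagonalizable over C with a real
   spectrum, so rank L counts its nonzero eigenvalues with algebraic
   multiplicity. *)

Lemma mul_mx_trmx_eq0 (R : realFieldType) m n (M : 'M[R]_(m, n)) :
  (M *m M^T == 0) = (M == 0).
Proof.
apply/eqP/eqP => [MMt0|->]; last by rewrite mul0mx.
apply/matrixP => i j; rewrite mxE.
have /matrixP /(_ i i) := MMt0; rewrite !mxE => /eqP.
rewrite psumr_eq0 => [/allP /(_ j (mem_index_enum _))|l _]; rewrite mxE -expr2.
  by rewrite sqrf_eq0 => /eqP.
exact: sqr_ge0.
Qed.

Lemma mxrank_mul_trmx (R : realFieldType) m n (M : 'M[R]_(m, n)) :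
  \rank (M *m M^T) = \rank M.
Proof.
apply/eqP; rewrite eqn_leq mxrankM_maxl /=.
set K := kermx (M *m M^T).
have KM0 : K *m M = 0.
  apply/eqP; rewrite -mul_mx_trmx_eq0 trmx_mul mulmxA -(mulmxA K).
  by rewrite mulmx_ker mul0mx.
have := mxrankS (introT sub_kermxP KM0); rewrite !mxrank_ker.
have := rank_leq_row M; have := rank_leq_row (M *m M^T); lia.
Qed.

Lemma sum_enum_val_indicator (R : pzSemiRingType) (T : finType) (v : T)
    (g : T -> R) :
  \sum_(k < #|T|) (enum_val k == v)%:R * g (enum_val k) = g v.
Proof.
rewrite -(big_enum_val (fun x => (x == v)%:R * g x)) (bigD1 v) //=.
by rewrite eqxx mul1r big1 ?addr0 // => x /negPf->; rewrite mul0r.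
Qed.

Section Incidence.
Variables (F : fieldType) (V E : finType) (tail head : E -> V).

Definition weak_adj : rel V := fun x y =>
  [exists e, ((tail e == x) && (head e == y)) || ((head e == x) && (tail e == y))].

Definition incidence_mx : 'M[F]_(#|E|, #|V|) :=
  \matrix_(i, j) ((enum_val j == head (enum_val i))%:R
                  - (enum_val j == tail (enum_val i))%:R).

Local Notation root_of := (fingraph.root weak_adj).
Definition component : finType := {x : V | roots weak_adj x}.

Lemma weak_adj_connect_sym : connect_sym weak_adj.
Proof.
apply: sym_connect_sym => x y; apply: eq_existsb => e.
by rewrite orbC; congr (_ || _); apply: andbC.
Qed.

Lemma root_tail_head e : root_of (tail e) = root_of (head e).
Proof.
apply/(fingraph.rootP weak_adj_connect_sym)/connect1.
by apply/existsP; exists e; rewrite !eqxx.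
Qed.

Lemma incidence_mul_trmx (y : 'rV[F]_#|V|) e :
  (y *m incidence_mx^T) 0 (enum_rank e)
    = y 0 (enum_rank (head e)) - y 0 (enum_rank (tail e)).
Proof.
pose g x := y 0 (enum_rank x).
rewrite -[y 0 (enum_rank (head e))](sum_enum_val_indicator _ g).
rewrite -[y 0 (enum_rank (tail e))](sum_enum_val_indicator _ g).
rewrite -sumrB mxE; apply: eq_bigr => k _.
by rewrite !mxE enum_rankK mulrC mulrBl /g enum_valK.
Qed.

Lemma ker_incidence_root (y : 'rV[F]_#|V|) x : y *m incidence_mx^T = 0 ->
  y 0 (enum_rank (root_of x)) = y 0 (enum_rank x).
Proof.
move=> y0; pose g z := y 0 (enum_rank z).
have closed_level : closed weak_adj [pred z | g z == g x].
  move=> z w /existsP[e He].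
  have /eqP := incidence_mul_trmx y e; rewrite y0 mxE eq_sym subr_eq0 => /eqP ge.
  by case/orP: He => /andP[/eqP <- /eqP <-]; rewrite !inE /g ge.
have := closed_connect closed_level (connect_root _ x).
by rewrite !inE eqxx => /esym/eqP.
Qed.

Definition component_mx : 'M[F]_(#|component|, #|V|) :=
  \matrix_(r, j) (root_of (enum_val j) == val (enum_val r))%:R.

Lemma component_mx_free : row_free component_mx.
Proof.
apply/row_freeP.
exists (\matrix_(j, s) (enum_val j == val (enum_val s))%:R).
apply/matrixP => r s; rewrite !mxE.
pose g x : F := (root_of x == val (enum_val r))%:R.
transitivity
  (\sum_(k < #|V|) (enum_val k == val (enum_val s))%:R * g (enum_val k)).
  by apply: eq_bigr => k _; rewrite !mxE mulrC.
rewrite sum_enum_val_indicator /g (eqP (valP (enum_val s))).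
by rewrite val_eqE (inj_eq enum_val_inj) eq_sym.
Qed.

Lemma component_mx_sub_ker : (component_mx <= kermx incidence_mx^T)%MS.
Proof.
apply/sub_kermxP/matrixP => r i; rewrite [RHS]mxE.
have := incidence_mul_trmx (row r component_mx) (enum_val i).
rewrite -row_mul mxE enum_valK => ->.
by rewrite !mxE !enum_rankK root_tail_head subrr.
Qed.

Lemma ker_sub_component_mx : (kermx incidence_mx^T <= component_mx)%MS.
Proof.
apply/row_subP => i; set y := row i _.
have y0 : y *m incidence_mx^T = 0 by rewrite -row_mul mulmx_ker row0.
pose g (x : V) := y 0 (enum_rank x).
apply/submxP; exists (\row_r g (val (enum_val r))); apply/rowP => j.
have root_j := roots_root weak_adj_connect_sym (enum_val j).
pose c : component := exist (roots weak_adj) _ root_j.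
rewrite -{1}(enum_valK j) -(ker_incidence_root _ y0).
transitivity
  (\sum_(k < #|component|) (enum_val k == c)%:R * g (val (enum_val k))).
  by rewrite (sum_enum_val_indicator c (fun x : component => g (val x))).
rewrite mxE; apply: eq_bigr => k _.
by rewrite !mxE mulrC -val_eqE eq_sym.
Qed.

Lemma mxrank_incidence :
  (\rank incidence_mx + n_comp weak_adj predT)%N = #|V|.
Proof.
have card_component : #|component| = n_comp weak_adj predT.
  by rewrite card_sig; apply: eq_card => x; rewrite !inE andbT.
have : \rank component_mx = \rank (kermx incidence_mx^T).
  by apply/eqmx_rank; rewrite component_mx_sub_ker ker_sub_component_mx.
rewrite (eqP component_mx_free) mxrank_ker mxrank_tr card_component.
have := rank_leq_col incidence_mx; lia.
Qed.

End Incidence.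

Lemma char_poly_similar (F : fieldType) n (P A : 'M[F]_n) :
  P \in unitmx -> char_poly (invmx P *m A *m P) = char_poly A.
Proof.
move=> Pu; rewrite /char_poly /char_poly_mx.
set Q := map_mx polyC P; set Qi := map_mx polyC (invmx P).
have QiQ : Qi *m Q = 1%:M by rewrite -map_mxM mulVmx // map_mx1.
have -> : 'X%:M - map_mx polyC (invmx P *m A *m P)
          = Qi *m ('X%:M - map_mx polyC A) *m Q.
  rewrite !map_mxM -/Q -/Qi mulmxBr mulmxBl; congr (_ - _).
  by rewrite scalar_mxC -mulmxA QiQ mulmx1.
rewrite (det_mulmx (Qi *m _) Q) (det_mulmx Qi) mulrC mulrA -det_mulmx.
by rewrite (mulmx1C QiQ) det1 mul1r.
Qed.

Lemma mxrank_diag_mx (F : fieldType) n (d : 'rV[F]_n) :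
  \rank (diag_mx d) = count (fun i => d 0 i != 0) (enum 'I_n).
Proof.
elim: n d => [|n IHn] d; first by rewrite thinmx0 mxrank0 enum_ord0.
rewrite enum_ordSl /= count_map.
set dr := \row_j d 0 (lift 0 j).
transitivity (\rank (diag_mx (row_mx (const_mx (d 0 0)) dr : 'rV_(1 + n)))).
  congr (\rank (diag_mx _)); apply/rowP => j; rewrite mxE; case: splitP => k /= jk.
    have -> : j = 0 by apply: val_inj; rewrite /= jk (ord1 k).
    by rewrite mxE.
  have -> : j = lift 0 k by apply: val_inj; rewrite /= jk.
  by rewrite mxE.
rewrite diag_mx_row rank_diag_block_mx IHn diag_const_mx rank_rV.
congr (_ + _)%N; last by apply: eq_count => i; rewrite mxE.
congr negb; apply/eqP/eqP => [/matrixP/(_ 0 0)|->].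
  by rewrite !mxE eqxx mulr1n.
by apply/matrixP => i j; rewrite !mxE mul0rn.
Qed.

Lemma realsym_char_poly_split (R : rcfType) n (L : 'M[R]_n) : L^T = L ->
  exists2 es : seq R, char_poly L = \prod_(x <- es) ('X - x%:P)
                    & count (predC1 0) es = \rank L.
Proof.
move=> symL; pose Lc := map_mx (real_complex R) L.
have herm : Lc \is hermsymmx.
  apply: realsym_hermsym; last by apply/mxOverP => i j; rewrite mxE complex_real.
  by apply/is_hermitianmxP; rewrite expr0 scale1r map_mx_id // map_trmx symL.
have /orthomx_spectralP Lc_diag := hermitian_normalmx herm.
have /mxOverP d_real := hermitian_spectral_diag_real herm.
set d := spectral_diag Lc in Lc_diag d_real.
have dRe i : real_complex R (complex.Re (d 0 i)) = d 0 i by apply: RRe_real.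
exists [seq complex.Re (d 0 i) | i <- enum 'I_n].
  apply: (@map_poly_inj _ _ (real_complex R)).
  rewrite map_char_poly -/Lc Lc_diag char_poly_similar ?spectral_unit //.
  rewrite char_poly_trig ?diag_mx_is_trig // rmorph_prod big_map big_enum /=.
  by apply: eq_bigr => i _; rewrite map_polyXsubC mxE eqxx mulr1n -{1}dRe.
have <- : \rank Lc = \rank L by apply: mxrank_map.
rewrite Lc_diag mxrankMfree ?row_free_unit ?spectral_unit //.
rewrite eqmxMfull ?row_full_unit ?unitmx_inv ?spectral_unit //.
rewrite mxrank_diag_mx count_map.
by apply: eq_count => i /=; rewrite -[d 0 i]dRe fmorph_eq0.
Qed.

Lemma nonzero_eigenvalues_mup (F : fieldType) n (A : 'M[F]_n) (es : seq F) :
  char_poly A = \prod_(x <- es) ('X - x%:P) ->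
  exists s : seq F,
    [/\ uniq s, (forall a, a \in s <-> (a != 0 /\ eigenvalue A a))
      & (\sum_(a <- s) mup a (char_poly A))%N = count (predC1 0) es].
Proof.
move=> charA; exists [seq a <- undup es | a != 0]; split.
- by rewrite filter_uniq ?undup_uniq.
- move=> a; rewrite mem_filter mem_undup eigenvalue_root_char charA root_prod_XsubC.
  by split => [/andP[]|[]] -> ->.
rewrite big_filter -sum1_count -[RHS]big_undup_iterop_count; apply: eq_bigr => a _.
by rewrite charA mu_prod_XsubC Monoid.iteropE iter_addn_0 mul1n.
Qed.

Section Macrograph.
Local Open Scope fset_scope.
Variables (R : realType) (Q0 Q1 : finType) (beta : Q1 -> tensor R Q0 * tensor R Q0).

Lemma Aof_Vmacro e : Aof beta e \in Vmacro beta.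
Proof. by rewrite in_fsetU; apply/orP; left; apply/imfsetP; exists e. Qed.

Lemma Bof_Vmacro e : Bof beta e \in Vmacro beta.
Proof. by rewrite in_fsetU; apply/orP; right; apply/imfsetP; exists e. Qed.

Definition macro_tail e : Vmacro beta := [` Aof_Vmacro e].
Definition macro_head e : Vmacro beta := [` Bof_Vmacro e].

Lemma Bmacro_incidence : Bmacro beta = incidence_mx R macro_tail macro_head.
Proof. by apply/matrixP => i j; rewrite !mxE /ind -!val_eqE. Qed.

Lemma c_macro_weak_adj :
  c_macro beta = n_comp (weak_adj macro_tail macro_head) predT.
Proof.
apply/eq_n_comp/eq_connect => x y; apply: eq_existsb => e.
by rewrite -!val_eqE.
Qed.

Lemma mxrank_Bmacro :
  (\rank (Bmacro beta) + c_macro beta)%N = #|{: Vmacro beta}|.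
Proof. by rewrite Bmacro_incidence c_macro_weak_adj mxrank_incidence. Qed.

Lemma dmx_factor : dmx beta = Bmacro beta *m phihat beta.
Proof.
apply/matrixP => i j; rewrite !mxE.
pose g (x : Vmacro beta) : R := val x (val (enum_val j)).
rewrite -[Bof _ _ _](sum_enum_val_indicator (macro_head (enum_val i)) g).
rewrite -[Aof _ _ _](sum_enum_val_indicator (macro_tail (enum_val i)) g).
rewrite -sumrB; apply: eq_bigr => k _.
by rewrite !mxE /ind -!val_eqE mulrBl.
Qed.

Lemma mxrank_dmx_add_delta :
  (\rank (dmx beta) + delta beta)%N = \rank (Bmacro beta).
Proof. by rewrite dmx_factor; apply: mxrank_mul_ker. Qed.

End Macrograph.

Theorem theorem6p5 (R : realType) (Q0 Q1 : finType)
    (beta : Q1 -> tensor R Q0 * tensor R Q0) :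
  [/\ (\rank (Lbeta beta))%:Z = (#|Q1|%:Z - (dimZ beta)%:Z),
      (\rank (Lbeta beta))%:Z =
        (#|{: Vmacro beta}|%:Z - (c_macro beta)%:Z - (delta beta)%:Z)
    & exists s : seq R,
        [/\ uniq s,
            (forall a : R, a \in s <-> (a != 0 /\ eigenvalue (Lbeta beta) a))
          & (\sum_(a <- s) mup a (char_poly (Lbeta beta)))%N = \rank (Lbeta beta)]].
Proof.
have rank_L : \rank (Lbeta beta) = \rank (dmx beta) by apply: mxrank_mul_trmx.
have dim_Z : dimZ beta = (#|Q1| - \rank (dmx beta))%N by apply: mxrank_ker.
have rank_d := rank_leq_row (dmx beta).
have rank_B := mxrank_dmx_add_delta beta.
have rank_macro := mxrank_Bmacro beta.
split; [lia | lia |].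
have symL : (Lbeta beta)^T = Lbeta beta by rewrite trmx_mul trmxK.
have [es charL count_es] := realsym_char_poly_split symL.
by rewrite -count_es; apply: nonzero_eigenvalues_mup.
Qed.
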